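(* Let $\alpha$ be a differentiable real-valued function on the set of real symmetric positive definite $3\times 3$ matrices, and let $h = \frac{\partial \alpha}{\partial C}$ be its gradient, i.e. the symmetric-matrix-valued function such that $D\alpha(C)\,\delta C = \mathrm{tr}\big(h(C)\,\delta C\big)$ for all symmetric $\delta C$. Assume $h$ is isotropic: $R^T h(C) R = h(R^T C R)$ for every rotation $R$ (real $3\times 3$ matrix with $R^TR=I$, $\det R=1$) and every symmetric positive definite $C$. For a symmetric positive definite $B$ set $\frac{\sigma}{\rho} := B^{1/2} h(B) B^{1/2}$. Then the function $\alpha\circ\exp$, defined on real symmetric $3\times 3$ matrices, is differentiable and its gradient at $\ln B$ equals $\frac{\sigma}{\rho}$: for every symmetric positive definite $B$ and every symmetric $\delta$, $$D(\alpha\circ\exp)(\ln B)\,\delta = \mathrm{tr}\Big(\frac{\sigma}{\rho}\,\delta\Big),\qquad\text{i.e.}\qquad \frac{\sigma}{\rho} = \frac{\partial(\alpha\circ\exp)}{\partial(\ln B)}.$$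
   Context: Physical interpretation: for a deformation gradient $F$ with polar decomposition $F=RU$, $C=F^TF$ is the right and $B=FF^T$ the left Cauchy–Green tensor; the hyperelastic constitutive law is $\Sigma/\rho_0 = \frac{\partial\alpha}{\partial C}(C)$ with $\Sigma$ the second Piola–Kirchhoff stress and $\rho_0$ the initial mass density; the Cauchy stress $\sigma$ and current density $\rho$ satisfy $\sigma/\rho = F(\Sigma/\rho_0)F^T$, which under isotropy equals $B^{1/2}h(B)B^{1/2}$. Here $B^{1/2}$ is the symmetric positive definite square root of $B$, $\ln B$ is the unique symmetric matrix with $\exp(\ln B)=B$, and gradients are taken with respect to the inner product $(X,Y)\mapsto \mathrm{tr}(XY)$ on symmetric matrices. *)

From HB Require Import structures.
From mathcomp Require Import all_boot all_order all_algebra.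
From mathcomp Require Import all_classical all_reals all_analysis.
Set Implicit Arguments. Unset Strict Implicit. Unset Printing Implicit Defensive.
Import Order.TTheory GRing.Theory Num.Theory numFieldNormedType.Exports.
Local Open Scope ring_scope.

Section Defs.
Variable R : realType.

Definition symmx (A : 'M[R]_3) : Prop := A^T = A.

Definition posdef (A : 'M[R]_3) : Prop :=
  symmx A /\ forall x : 'cV[R]_3, x != 0 -> 0 < (x^T *m A *m x) 0 0.

Definition rotation (Q : 'M[R]_3) : Prop := Q^T *m Q = 1%:M /\ \det Q = 1.

Definition expm (A : 'M[R]_3) : 'M[R]_3 :=
  \matrix_(i, j) limn (fun n : nat => ((\sum_(k < n) (k`!%:R)^-1 *: A ^+ k) i j : R^o)).

Definition mnorm (A : 'M[R]_3) : R := \sum_i \sum_j `|A i j|.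

(* f (defined near C in the space of symmetric matrices) is Frechet
   differentiable at C along symmetric directions, and its gradient w.r.t.
   the inner product (X,Y) |-> tr(XY) is the symmetric matrix G:
   f (C + D) = f C + tr (G D) + o(|D|) for symmetric D. *)
Definition sym_gradient (f : 'M[R]_3 -> R) (C G : 'M[R]_3) : Prop :=
  symmx G /\
  forall eps : R, 0 < eps -> exists r : R, 0 < r /\
    forall D : 'M[R]_3, symmx D -> mnorm D < r ->
      `|f (C + D) - f C - \tr (G *m D)| <= eps * mnorm D.

End Defs.

From mathcomp Require Import all_boot all_order all_algebra.
From mathcomp Require Import all_classical all_reals all_analysis.
From mathcomp Require Import ring lra complex.
Import Order.TTheory GRing.Theory Num.Theory numFieldNormedType.Exports.
Set Implicit Arguments. Unset Strict Implicit. Unset Printing Implicit Defensive.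
Local Open Scope classical_set_scope.
Local Open Scope ring_scope.

(* Isotropy makes h(B) commute with every rotation commuting with B, in
   particular with the half-turn about any eigenvector of a symmetric M whose
   commutant is contained in that of B, as for M = ln B and M = B^(1/2).  Such
   a half-turn forces that eigenvector to be an eigenvector of h(B) as well, and
   the eigenvectors of a symmetric matrix span (spectral theorem), so h(B)
   commutes with ln B and B^(1/2), whence B^(1/2) h(B) B^(1/2) = h(B) B.
   For H commuting with L the derivative of X |-> X^k at L in direction D,
   traced against H, is k tr(H L^(k-1) D); summing the exponential series,
   tr(H (exp(L + D) - exp L)) = tr(H exp(L) D) + O(|D|^2), and exp is
   Lipschitz near L.  The chain rule then gives h(B) exp(L) = h(B) B as the
   gradient of alpha o exp at L. *)

Section EntrywiseNorm.
Variable R : realType.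

Definition l1norm m n (A : 'M[R]_(m, n)) : R := \sum_i \sum_j `|A i j|.

Lemma mnormE (A : 'M[R]_3) : mnorm A = l1norm A.
Proof. by []. Qed.

Section Rectangular.
Variables m n : nat.
Implicit Types A B : 'M[R]_(m, n).

Lemma l1norm_ge0 A : 0 <= l1norm A.
Proof. by apply: sumr_ge0 => i _; apply: sumr_ge0. Qed.

Lemma l1norm0 : l1norm (0 : 'M[R]_(m, n)) = 0.
Proof. by rewrite /l1norm big1 // => i _; rewrite big1 // => j _; rewrite mxE normr0. Qed.

Lemma ler_row_l1norm A i : \sum_j `|A i j| <= l1norm A.
Proof.
rewrite /l1norm [leRHS](bigD1 i) //= lerDl.
by apply: sumr_ge0 => *; apply: sumr_ge0.
Qed.

Lemma ler_entry_l1norm A i j : `|A i j| <= l1norm A.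
Proof.
apply: le_trans (ler_row_l1norm A i).
by rewrite (bigD1 j) //= lerDl sumr_ge0.
Qed.

Lemma l1normD A B : l1norm (A + B) <= l1norm A + l1norm B.
Proof.
rewrite /l1norm -big_split /=; apply: ler_sum => i _.
rewrite -big_split /=; apply: ler_sum => j _; rewrite mxE; exact: ler_normD.
Qed.

Lemma l1normZ (c : R) A : l1norm (c *: A) = `|c| * l1norm A.
Proof.
rewrite /l1norm mulr_sumr; apply: eq_bigr => i _; rewrite mulr_sumr.
by apply: eq_bigr => j _; rewrite mxE normrM.
Qed.

Lemma l1norm_sum (I : Type) (r : seq I) (F : I -> 'M[R]_(m, n)) :
  l1norm (\sum_(i <- r) F i) <= \sum_(i <- r) l1norm (F i).
Proof.
elim: r => [|x r IH]; first by rewrite !big_nil l1norm0.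
by rewrite !big_cons (le_trans (l1normD _ _)) ?lerD.
Qed.

End Rectangular.

Lemma l1normM m n p (A : 'M[R]_(m, n)) (B : 'M[R]_(n, p)) :
  l1norm (A *m B) <= l1norm A * l1norm B.
Proof.
rewrite /l1norm mulr_suml; apply: ler_sum => i _.
apply: (@le_trans _ _ (\sum_j \sum_k `|A i k| * `|B k j|)).
  apply: ler_sum => j _; rewrite mxE; apply: (le_trans (ler_norm_sum _ _ _)).
  by apply: ler_sum => k _; rewrite normrM.
rewrite exchange_big /= mulr_suml; apply: ler_sum => k _.
by rewrite -mulr_sumr ler_wpM2l // ler_row_l1norm.
Qed.

Lemma ler_abs_trace_mul m n (A : 'M[R]_(m, n)) (B : 'M[R]_(n, m)) :
  `|\tr (A *m B)| <= l1norm A * l1norm B.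
Proof.
rewrite /mxtrace mulr_suml; apply: (le_trans (ler_norm_sum _ _ _)).
apply: ler_sum => i _; rewrite mxE mulr_suml.
apply: (le_trans (ler_norm_sum _ _ _)); apply: ler_sum => k _.
by rewrite normrM ler_wpM2l ?ler_entry_l1norm.
Qed.

End EntrywiseNorm.

Section SquareNorm.
Variables (R : realType) (n : nat).
Implicit Types A : 'M[R]_n.

Lemma l1norm1 : l1norm (1%:M : 'M[R]_n) = n%:R.
Proof.
rewrite /l1norm -[n in RHS]card_ord -sumr_const; apply: eq_bigr => i _.
rewrite (bigD1 i) //= big1 => [|j /negPf ji]; last by rewrite mxE eq_sym ji normr0.
by rewrite mxE eqxx normr1 addr0.
Qed.

Lemma l1normX A k : l1norm (A ^+ k) <= n%:R * l1norm A ^+ k.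
Proof.
elim: k => [|k IH]; first by rewrite expr0 mulr1 -l1norm1.
rewrite exprS (le_trans (l1normM _ _)) // exprS mulrCA.
by rewrite ler_wpM2l ?l1norm_ge0.
Qed.

End SquareNorm.

Section EntrywiseLimits.
Variable R : realType.

Definition mxcvg m n (u : nat -> 'M[R]_(m, n)) (M : 'M[R]_(m, n)) :=
  forall i j, u k i j @[k --> \oo] --> M i j.

Lemma cvg_sum_seq (I : Type) (r : seq I) (f : I -> nat -> R) (l : I -> R) :
  (forall i, f i k @[k --> \oo] --> l i) ->
  (\sum_(i <- r) f i k) @[k --> \oo] --> \sum_(i <- r) l i.
Proof. by move=> fl; apply: cvg_big => //; exact: add_continuous. Qed.

Section Rectangular.
Variables m n : nat.
Implicit Types (u v : nat -> 'M[R]_(m, n)) (M N : 'M[R]_(m, n)).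

Lemma mxcvg_uniq u M N : mxcvg u M -> mxcvg u N -> M = N.
Proof. by move=> uM uN; apply/matrixP => i j; exact: cvg_unique (uM i j) (uN i j). Qed.

Lemma mxcvgS u M : mxcvg u M -> mxcvg (fun k => u k.+1) M.
Proof. by move=> uM i j; move: (uM i j); rewrite -cvg_shiftS. Qed.

Lemma mxcvgB u v M N : mxcvg u M -> mxcvg v N -> mxcvg (fun k => u k - v k) (M - N).
Proof. by move=> uM vN i j; rewrite !mxE; under eq_fun do rewrite !mxE; exact: cvgB. Qed.

Lemma mxcvg_tr u M : mxcvg u M -> mxcvg (fun k => (u k)^T) M^T.
Proof. by move=> uM i j; rewrite mxE; under eq_fun do rewrite mxE; exact: uM. Qed.

Lemma mxcvg_mull p (X : 'M[R]_(p, m)) u M :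
  mxcvg u M -> mxcvg (fun k => X *m u k) (X *m M).
Proof.
move=> uM i j; rewrite mxE; under eq_fun do rewrite mxE.
by apply: cvg_sum_seq => l; exact: cvgMr.
Qed.

Lemma mxcvg_mulr p (X : 'M[R]_(n, p)) u M :
  mxcvg u M -> mxcvg (fun k => u k *m X) (M *m X).
Proof.
move=> uM i j; rewrite mxE; under eq_fun do rewrite mxE.
by apply: cvg_sum_seq => l; exact: cvgMl.
Qed.

Lemma mxcvg_l1norm u M : mxcvg u M -> l1norm (u k) @[k --> \oo] --> l1norm M.
Proof.
by move=> uM; apply: cvg_sum_seq => i; apply: cvg_sum_seq => j; exact: cvg_norm.
Qed.

End Rectangular.

Lemma mxcvg_trace n (u : nat -> 'M[R]_n) M :
  mxcvg u M -> \tr (u k) @[k --> \oo] --> \tr M.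
Proof. by move=> uM; apply: cvg_sum_seq => i; exact: uM. Qed.

End EntrywiseLimits.

Section MatrixExponential.
Variable R : realType.

Definition exp_psum n (A : 'M[R]_n) k : 'M[R]_n := \sum_(l < k) (l`!%:R)^-1 *: A ^+ l.

Definition expmx n (A : 'M[R]_n) : 'M[R]_n :=
  \matrix_(i, j) limn (fun k => (exp_psum A k i j : R^o)).

Lemma expmE (A : 'M[R]_3) : expm A = expmx A.
Proof. by []. Qed.

Lemma sum_exp_coeff_le (x : R) N : 0 <= x ->
  \sum_(k < N) (k`!%:R)^-1 * x ^+ k <= expR x.
Proof.
move=> x0; have -> : \sum_(k < N) (k`!%:R)^-1 * x ^+ k = series (exp_coeff x) N.
  by rewrite /series /= big_mkord; apply: eq_bigr => k _; rewrite /exp_coeff /= mulrC.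
apply: nondecreasing_cvgn_le; last exact: is_cvg_series_exp_coeff.
by apply: nondecreasing_series => k _ _; rewrite /exp_coeff /= divr_ge0 ?exprn_ge0.
Qed.

Variable n : nat.
Implicit Types A X : 'M[R]_n.

Lemma exp_psum_entry A k i j :
  exp_psum A k i j = series (fun l => (l`!%:R)^-1 * (A ^+ l) i j) k.
Proof.
by rewrite /exp_psum summxE /series /= big_mkord; apply: eq_bigr => l _; rewrite mxE.
Qed.

Lemma mxcvg_exp_psum A : mxcvg (exp_psum A) (expmx A).
Proof.
move=> i j; rewrite mxE.
suff /cvg_ex[l ul] : cvgn (fun k => exp_psum A k i j) by rewrite (cvg_lim _ ul).
under eq_fun do rewrite exp_psum_entry.
apply: normed_cvg.
apply: (@series_le_cvg _ _ (fun k => n%:R * exp_coeff (l1norm A) k)).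
- by move=> k /=.
- by move=> k; rewrite mulr_ge0 // divr_ge0 ?exprn_ge0 ?l1norm_ge0.
- move=> k /=; rewrite /exp_coeff normrM ger0_norm ?invr_ge0 // mulrC mulrA.
  rewrite ler_wpM2r ?invr_ge0 //.
  exact: le_trans (ler_entry_l1norm _ _ _) (l1normX _ _).
- have -> : series (fun k => n%:R * exp_coeff (l1norm A) k) =
            (fun N => n%:R * series (exp_coeff (l1norm A)) N).
    by apply: funext => N; rewrite /series /= mulr_sumr.
  by apply: is_cvgMr; exact: is_cvg_series_exp_coeff.
Qed.
(* [mxcvg] unfolds to a product mentioning [A], which would make [A] implicit. *)
#[global] Arguments mxcvg_exp_psum : clear implicits.

Lemma trmxX A k : (A ^+ k)^T = A^T ^+ k.
Proof.
elim: k => [|k IH]; first by rewrite !expr0 trmx1.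
by rewrite exprS -mulmxE trmx_mul IH exprSr mulmxE.
Qed.

Lemma expmx_tr A : (expmx A)^T = expmx A^T.
Proof.
apply: (mxcvg_uniq (mxcvg_tr (mxcvg_exp_psum A))).
suff -> : (fun k => (exp_psum A k)^T) = exp_psum A^T by exact: mxcvg_exp_psum.
apply: funext => k; rewrite /exp_psum linear_sum; apply: eq_bigr => l _.
by rewrite linearZ /= trmxX.
Qed.

Lemma comm_mx_expmx X A : comm_mx X A -> comm_mx X (expmx A).
Proof.
move=> XA; rewrite /comm_mx; apply: (mxcvg_uniq (mxcvg_mull (mxcvg_exp_psum A))).
suff -> : (fun k => X *m exp_psum A k) = (fun k => exp_psum A k *m X).
  exact: mxcvg_mulr (mxcvg_exp_psum A).
apply: funext => k; apply: comm_mx_sum => l _.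
rewrite /comm_mx -scalemxAl -scalemxAr; congr (_ *: _).
exact: commrX.
Qed.

End MatrixExponential.

Lemma geometric_recurrence_bound (R : realFieldType) (x : nat -> R) (b g c : R) :
  0 <= b <= g -> 1 <= g -> 0 <= c -> x 0%N <= c ->
  (forall k, x k.+1 <= b * x k + c * g ^+ k) ->
  forall k, x k <= c * (2 * g) ^+ k.
Proof.
move=> /andP[b0 bg] g1 c0 x0 rec; elim=> [|k IH]; first by rewrite expr0 mulr1.
have Pk : 0 <= c * (2 * g) ^+ k by rewrite mulr_ge0 // exprn_ge0 //; lra.
have gk : g ^+ k <= (2 * g) ^+ k by rewrite lerXn2r ?nnegrE //; lra.
apply: (le_trans (rec k)); rewrite exprS mulrCA.
set P := c * (2 * g) ^+ k in Pk IH *.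
have h1 : b * x k <= g * P.
  by apply: (@le_trans _ _ (b * P)); rewrite ?ler_wpM2l ?ler_wpM2r.
have h2 : c * g ^+ k <= g * P.
  by rewrite (le_trans _ (ler_peMl _ _)) ?ler_wpM2l.
lra.
Qed.

Section ExponentialTaylor.
Variables (R : realType) (n : nat).
Implicit Types L D X : 'M[R]_n.

Fixpoint mxpow_deriv L D k : 'M[R]_n :=
  if k is k'.+1 then L *m mxpow_deriv L D k' + D *m L ^+ k' else 0.

Lemma trace_mxpow_deriv X L D k : comm_mx X L ->
  \tr (X *m mxpow_deriv L D k.+1) = k.+1%:R * \tr (X *m L ^+ k *m D).
Proof.
elim: k X => [|k IH] X XL; first by rewrite /= mulmx0 add0r expr0 mul1r !mulmxE !mulr1.
have XLk : comm_mx X (L ^+ k.+1) by exact: commrX.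
rewrite [mxpow_deriv _ _ _.+1]/= mulmxDr mxtraceD mulmxA IH; last first.
  by rewrite /comm_mx [RHS]mulmxA -XL.
have -> : X *m L *m L ^+ k = X *m L ^+ k.+1 by rewrite -mulmxA exprS mulmxE.
rewrite [X *m (D *m _)]mulmxA [\tr (X *m D *m _)]mxtrace_mulC mulmxA -XLk.
by rewrite -[k.+2]addn1 natrD mulrDl mul1r.
Qed.

Variables L D : 'M[R]_n.
Hypothesis D_le1 : l1norm D <= 1.
Let d := l1norm D.
Let b := l1norm L + 1.

Let b_ge1 : 1 <= b. Proof. by have := l1norm_ge0 L; rewrite /b; lra. Qed.
Let d_ge0 : 0 <= d. Proof. exact: l1norm_ge0. Qed.

Let l1normX_le k : l1norm (L ^+ k) <= n%:R * b ^+ k.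
Proof.
apply: le_trans (l1normX _ _) _; rewrite ler_wpM2l // lerXn2r ?nnegrE ?l1norm_ge0 //.
  by have := b_ge1; lra.
by rewrite /b lerDl.
Qed.

Lemma l1norm_powD_sub k : l1norm ((L + D) ^+ k - L ^+ k) <= n%:R * d * (2 * b) ^+ k.
Proof.
have LD_le : l1norm (L + D) <= b by apply: le_trans (l1normD _ _) _; rewrite /b lerD.
apply: (@geometric_recurrence_bound _ (fun k => l1norm ((L + D) ^+ k - L ^+ k)) b b).
- by rewrite lexx andbT; have := b_ge1; lra.
- exact: b_ge1.
- by rewrite mulr_ge0.
- by rewrite /= subrr l1norm0 mulr_ge0.
move=> {}k /=; rewrite [(L + D) ^+ k.+1]exprS [L ^+ k.+1]exprS.
have -> : (L + D) * (L + D) ^+ k - L * L ^+ k =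
          (L + D) *m ((L + D) ^+ k - L ^+ k) + D *m L ^+ k.
  by rewrite -!mulmxE mulmxBr mulmxDl mulmxDl opprD !addrA addrNK.
apply: le_trans (l1normD _ _) _; apply: lerD.
  by apply: le_trans (l1normM _ _) _; rewrite ler_wpM2r ?l1norm_ge0.
by apply: le_trans (l1normM _ _) _; rewrite mulrAC mulrC -/d ler_wpM2r.
Qed.

Lemma l1norm_powD_taylor k :
  l1norm ((L + D) ^+ k - L ^+ k - mxpow_deriv L D k) <= n%:R * d ^+ 2 * (4 * b) ^+ k.
Proof.
rewrite (_ : 4 * b = 2 * (2 * b)); last by ring.
apply: (@geometric_recurrence_bound _
  (fun k => l1norm ((L + D) ^+ k - L ^+ k - mxpow_deriv L D k)) b (2 * b)).
- by have := b_ge1; lra.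
- by have := b_ge1; lra.
- by rewrite mulr_ge0 ?exprn_ge0.
- by rewrite /= !subrr l1norm0 mulr_ge0 ?exprn_ge0.
move=> {}k /=; rewrite [(L + D) ^+ k.+1]exprS [L ^+ k.+1]exprS.
have -> : (L + D) * (L + D) ^+ k - L * L ^+ k - (L *m mxpow_deriv L D k + D *m L ^+ k) =
          L *m ((L + D) ^+ k - L ^+ k - mxpow_deriv L D k) + D *m ((L + D) ^+ k - L ^+ k).
  by rewrite -!mulmxE !mulmxBr mulmxDl opprD !addrA !(addrAC _ (D *m (L + D) ^+ k)).
apply: le_trans (l1normD _ _) _; apply: lerD.
  by apply: le_trans (l1normM _ _) _; rewrite ler_wpM2r ?l1norm_ge0 // /b lerDl.
apply: le_trans (l1normM _ _) _.
rewrite (_ : n%:R * d ^+ 2 * _ = d * (n%:R * d * (2 * b) ^+ k)); last by ring.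
by rewrite ler_wpM2l // l1norm_powD_sub.
Qed.

Lemma exp_psumDB k : exp_psum (L + D) k - exp_psum L k =
  \sum_(l < k) (l`!%:R)^-1 *: ((L + D) ^+ l - L ^+ l).
Proof. by rewrite /exp_psum -sumrB; apply: eq_bigr => l _; rewrite scalerBr. Qed.

Lemma l1norm_expmxDB : l1norm (expmx (L + D) - expmx L) <= n%:R * d * expR (2 * b).
Proof.
have cvgB := mxcvgB (mxcvg_exp_psum (L + D)) (mxcvg_exp_psum L).
apply: (cvgr_to_le (mxcvg_l1norm cvgB)); apply: nearW => N.
rewrite exp_psumDB; apply: le_trans (l1norm_sum _ _) _.
apply: (@le_trans _ _ (\sum_(k < N) n%:R * d * ((k`!%:R)^-1 * (2 * b) ^+ k))).
  apply: ler_sum => k _; rewrite l1normZ ger0_norm ?invr_ge0 // mulrCA.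
  by rewrite ler_wpM2l ?invr_ge0 // l1norm_powD_sub.
rewrite -mulr_sumr ler_wpM2l ?mulr_ge0 // sum_exp_coeff_le //.
by have := b_ge1; lra.
Qed.

Variable X : 'M[R]_n.
Hypothesis XL : comm_mx X L.

Lemma trace_exp_psum_deriv N : \tr (X *m exp_psum L N *m D) =
  \sum_(k < N.+1) (k`!%:R)^-1 * \tr (X *m mxpow_deriv L D k).
Proof.
rewrite big_ord_recl /= mulmx0 mxtrace0 mulr0 add0r.
rewrite /exp_psum mulmx_sumr mulmx_suml linear_sum; apply: eq_bigr => k _.
rewrite /bump /= trace_mxpow_deriv // -scalemxAr -scalemxAl mxtraceZ mulrA.
by rewrite add0n add1n factS natrM invfM [_^-1 * _^-1 * _]mulrAC mulVf ?mul1r.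
Qed.

Lemma trace_expmx_taylor :
  `|\tr (X *m (expmx (L + D) - expmx L)) - \tr (X *m expmx L *m D)|
    <= l1norm X * (n%:R * d ^+ 2 * expR (4 * b)).
Proof.
have cvg1 : mxcvg (fun N => X *m (exp_psum (L + D) N.+1 - exp_psum L N.+1))
                  (X *m (expmx (L + D) - expmx L)).
  exact: mxcvg_mull (mxcvgS (mxcvgB (mxcvg_exp_psum _) (mxcvg_exp_psum _))).
have cvg2 : mxcvg (fun N => X *m exp_psum L N *m D) (X *m expmx L *m D).
  exact: mxcvg_mulr (mxcvg_mull (mxcvg_exp_psum _)).
apply: (cvgr_to_le (cvg_norm (cvgB (mxcvg_trace cvg1) (mxcvg_trace cvg2)))).
apply: nearW => N; rewrite !fctE.
rewrite trace_exp_psum_deriv exp_psumDB mulmx_sumr linear_sum -sumrB.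
under eq_bigr do rewrite -scalemxAr linearZ /= -mulrBr -raddfB -mulmxBr.
apply: le_trans (ler_norm_sum _ _ _) _.
apply: (@le_trans _ _ (\sum_(k < N.+1)
   l1norm X * (n%:R * d ^+ 2) * ((k`!%:R)^-1 * (4 * b) ^+ k))).
  apply: ler_sum => k _; rewrite normrM ger0_norm ?invr_ge0 // mulrCA.
  rewrite ler_wpM2l ?invr_ge0 // (le_trans (ler_abs_trace_mul _ _)) //.
  by rewrite -mulrA ler_wpM2l ?l1norm_ge0 // l1norm_powD_taylor.
rewrite -mulr_sumr -mulrA ler_wpM2l ?l1norm_ge0 // ler_wpM2l ?mulr_ge0 ?exprn_ge0 //.
by rewrite sum_exp_coeff_le //; have := b_ge1; lra.
Qed.

End ExponentialTaylor.

Section RealSymmetricEigenvectors.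
Variables (R : rcfType) (n : nat).
Local Notation toC := (real_complex R).
Local Notation Re := (@complex.Re R).
Local Notation Im := (@complex.Im R).

Lemma map_Re_mul_real (z : 'rV[R[i]]_n) (M : 'M[R]_n) :
  map_mx Re (z *m map_mx toC M) = map_mx Re z *m M.
Proof.
apply/rowP => j; rewrite !mxE (raddf_sum (Re : Rcomplex R -> R)).
by apply: eq_bigr => l _; rewrite !mxE; case: (z 0 l) => a b /=; ring.
Qed.

Lemma map_Im_mul_real (z : 'rV[R[i]]_n) (M : 'M[R]_n) :
  map_mx Im (z *m map_mx toC M) = map_mx Im z *m M.
Proof.
apply/rowP => j; rewrite !mxE (raddf_sum (Im : Rcomplex R -> R)).
by apply: eq_bigr => l _; rewrite !mxE; case: (z 0 l) => a b /=; ring.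
Qed.

Lemma real_eigenvectors_of_complex (M : 'M[R]_n) (z : 'rV[R[i]]_n) (c : R[i]) :
  Im c = 0 -> z *m map_mx toC M = c *: z ->
  map_mx Re z *m M = Re c *: map_mx Re z /\ map_mx Im z *m M = Re c *: map_mx Im z.
Proof.
case: c => a b /= -> zM; rewrite -map_Re_mul_real -map_Im_mul_real zM.
by split; apply/rowP => j; rewrite !mxE; case: (z 0 j) => u v /=; ring.
Qed.

Lemma map_ReIm_eq0 m (Z : 'M[R[i]]_(m, n)) : map_mx Re Z = 0 -> map_mx Im Z = 0 -> Z = 0.
Proof.
move=> /matrixP Re0 /matrixP Im0; apply/matrixP => i j.
by have := Re0 i j; have := Im0 i j; rewrite !mxE; case: (Z i j) => a b /= -> ->.
Qed.

Lemma eq0_on_sym_eigenvectors (M K : 'M[R]_n) : M^T = M ->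
  (forall (x : 'rV[R]_n) (l : R), x *m M = l *: x -> x *m K = 0) -> K = 0.
Proof.
move=> MT Keig; pose Mc := map_mx toC M; pose Kc := map_mx toC K.
have Mc_herm : Mc \is hermsymmx.
  apply: realsym_hermsym; last by apply/mxOverP => i j; rewrite mxE complex_real.
  by apply/is_hermitianmxP; rewrite expr0 scale1r map_mx_id // /Mc map_trmx MT.
have /orthomx_spectralP Mc_spec := hermitian_normalmx Mc_herm.
have dg_real := hermitian_spectral_diag_real Mc_herm.
set P := spectralmx Mc in Mc_spec; set dg := spectral_diag Mc in Mc_spec dg_real.
have P_unit : P \in unitmx := spectral_unit Mc.
have PM : P *m Mc = diag_mx dg *m P by rewrite [in LHS]Mc_spec !mulmxA mulmxV // mul1mx.
suff PK : P *m Kc = 0.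
  apply: (@map_mx_inj _ _ (real_complex R)).
  by rewrite map_mx0 -/Kc -(mulKmx P_unit Kc) PK mulmx0.
apply/row_matrixP => k; rewrite row_mul row0.
have zM : row k P *m Mc = dg 0 k *: row k P.
  by rewrite -row_mul PM mul_diag_mx; apply/rowP => j; rewrite !mxE.
have Im_dg : Im (dg 0 k) = 0.
  by have := mxOverP dg_real 0 k; case: (dg 0 k) => u v; rewrite complex_real => /eqP.
have [/Keig ReK /Keig ImK] := real_eigenvectors_of_complex Im_dg zM.
by apply: map_ReIm_eq0; rewrite ?map_Re_mul_real ?map_Im_mul_real.
Qed.

End RealSymmetricEigenvectors.

Lemma det_mx33 (R : comRingType) (f : nat -> nat -> R) :
  \det (\matrix_(i < 3, j < 3) f i j) =
  f 0 0 * (f 1 1 * f 2 2 - f 1 2 * f 2 1) - f 0 1 * (f 1 0 * f 2 2 - f 1 2 * f 2 0)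
  + f 0 2 * (f 1 0 * f 2 1 - f 1 1 * f 2 0).
Proof.
rewrite (expand_det_row _ 0) !big_ord_recl big_ord0 /cofactor.
rewrite !(expand_det_row _ 0) !big_ord_recl !big_ord0 /cofactor !det_mx11 !mxE /=.
ring.
Qed.

Lemma sqnorm_gt0 (R : realDomainType) n (x : 'rV[R]_n) : x != 0 -> 0 < (x *m x^T) 0 0.
Proof.
move=> x0; rewrite mxE lt_def psumr_eq0 => [|j _]; last by rewrite mxE -expr2 sqr_ge0.
rewrite sumr_ge0 => [|j _]; last by rewrite mxE -expr2 sqr_ge0.
rewrite andbT; apply: contra x0 => /allP x_eq0; apply/eqP/rowP => j.
by have := x_eq0 j (mem_index_enum _); rewrite mxE -expr2 sqrf_eq0 mxE => /eqP ->.
Qed.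

Section HalfTurn.
Variable R : realType.
Implicit Types (x : 'rV[R]_3) (M H : 'M[R]_3).

Definition half_turn x : 'M[R]_3 := (2 / (x *m x^T) 0 0) *: (x^T *m x) - 1%:M.

Lemma half_turn_sym x : (half_turn x)^T = half_turn x.
Proof. by rewrite /half_turn linearB /= linearZ /= trmx_mul trmxK trmx1. Qed.

Lemma half_turn_sqr x : x != 0 -> half_turn x *m half_turn x = 1%:M.
Proof.
move=> x0; have s0 := sqnorm_gt0 x0; set s := (x *m x^T) 0 0 in s0 *.
have xxT : x *m x^T = s%:M by rewrite [LHS]mx11_scalar.
have PP : x^T *m x *m (x^T *m x) = s *: (x^T *m x).
  by rewrite mulmxA -[x^T *m x *m x^T]mulmxA xxT mul_mx_scalar scalemxAl.
rewrite /half_turn -/s mulmxBl !mulmxBr mul1mx mulmx1 -!scalemxAl -!scalemxAr PP !scalerA.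
rewrite opprB addrA -addrA -scalerBl.
have -> : 2 / s * (2 / s) * s - 2 / s = 2 / s by field; rewrite gt_eqF.
by rewrite mul1mx addrC subrK.
Qed.

Lemma det_half_turn x : x != 0 -> \det (half_turn x) = 1.
Proof.
move=> x0; have s0 := sqnorm_gt0 x0; set c := 2 / (x *m x^T) 0 0.
pose f i j := c * (x 0 (inord i) * x 0 (inord j)) - (i == j)%:R.
have -> : half_turn x = \matrix_(i < 3, j < 3) f i j.
  rewrite /half_turn -/c; apply/matrixP => i j; rewrite !mxE big_ord1 !mxE /f !inord_val.
  by rewrite (ord1 0).
have sqE : (x *m x^T) 0 0 = x 0 (inord 0) ^+ 2 + x 0 (inord 1) ^+ 2 + x 0 (inord 2) ^+ 2.
  rewrite mxE !big_ord_recr big_ord0 /= !mxE add0r !expr2.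
  by congr (_ + _ + _); congr (x 0 _ * x 0 _); apply: val_inj; rewrite /= inordK.
have cs : c * (x 0 (inord 0) ^+ 2 + x 0 (inord 1) ^+ 2 + x 0 (inord 2) ^+ 2) = 2.
  by rewrite -sqE /c mulfVK ?gt_eqF.
rewrite det_mx33 /f /= !mulr1n !mulr0n.
transitivity (c * (x 0 (inord 0) ^+ 2 + x 0 (inord 1) ^+ 2 + x 0 (inord 2) ^+ 2) - 1).
  by ring.
by rewrite cs; lra.
Qed.

Lemma half_turn_rotation x : x != 0 -> rotation (half_turn x).
Proof. by move=> x0; split; rewrite ?half_turn_sym ?half_turn_sqr ?det_half_turn. Qed.

Lemma comm_half_turn_eigenvector M x l : M^T = M -> x *m M = l *: x ->
  comm_mx (half_turn x) M.
Proof.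
move=> MT xM; have Mx : M *m x^T = l *: x^T by rewrite -[M]MT -trmx_mul xM linearZ.
rewrite /comm_mx /half_turn mulmxBl mulmxBr mul1mx mulmx1 -scalemxAl -scalemxAr.
by rewrite -mulmxA xM mulmxA Mx -scalemxAl -scalemxAr.
Qed.

Lemma eigenvector_of_comm_half_turn H x : x != 0 -> comm_mx (half_turn x) H ->
  exists mu, x *m H = mu *: x.
Proof.
move=> x0 HQ; have s0 := sqnorm_gt0 x0; set s := (x *m x^T) 0 0 in s0.
have PH : x^T *m x *m H = H *m (x^T *m x).
  move: HQ; rewrite /comm_mx /half_turn mulmxBl mulmxBr mul1mx mulmx1 -scalemxAl -scalemxAr.
  move/(congr1 (fun A => (2 / s)^-1 *: (A + H))); rewrite !subrK !scalerA mulVf ?scale1r //.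
  by rewrite mulf_neq0 ?invr_eq0 ?gt_eqF.
have xH : s *: (x *m H) = (x *m H *m x^T) 0 0 *: x.
  have := congr1 (mulmx x) PH; rewrite !mulmxA [x *m x^T]mx11_scalar -/s mul_scalar_mx.
  by rewrite -scalemxAl => ->; rewrite {1}[x *m H *m x^T]mx11_scalar mul_scalar_mx.
exists ((x *m H *m x^T) 0 0 / s).
by rewrite mulrC -scalerA -xH scalerA mulVf ?gt_eqF // scale1r.
Qed.

Lemma comm_mx_of_half_turns M H : M^T = M ->
  (forall x, x != 0 -> comm_mx (half_turn x) M -> comm_mx (half_turn x) H) ->
  comm_mx H M.
Proof.
move=> MT HQ; apply/eqP; rewrite -subr_eq0; apply/eqP.
apply: (eq0_on_sym_eigenvectors MT) => x l xM.
have [->|x0] := eqVneq x 0; first by rewrite mul0mx.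
have [mu xH] := eigenvector_of_comm_half_turn x0 (HQ x x0 (comm_half_turn_eigenvector MT xM)).
by rewrite mulmxBr !mulmxA xH xM -!scalemxAl xM xH !scalerA mulrC subrr.
Qed.

End HalfTurn.

Lemma sym_gradient_comp (R : realType) (f : 'M[R]_3 -> R) (phi : 'M[R]_3 -> 'M[R]_3)
    (L G G' : 'M[R]_3) (K1 K2 : R) :
  0 <= K1 -> 0 <= K2 -> symmx G' -> sym_gradient f (phi L) G ->
  (forall D, symmx D -> symmx (phi (L + D) - phi L)) ->
  (forall D, symmx D -> mnorm D <= 1 -> mnorm (phi (L + D) - phi L) <= K1 * mnorm D) ->
  (forall D, symmx D -> mnorm D <= 1 ->
     `|\tr (G *m (phi (L + D) - phi L)) - \tr (G' *m D)| <= K2 * mnorm D ^+ 2) ->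
  sym_gradient (fun X => f (phi X)) L G'.
Proof.
move=> K1_ge0 K2_ge0 G'sym [_ fG] phi_sym phi_lip phi_tr; split => // eps eps_gt0.
have K1_gt0 : 0 < K1 + 1 by lra.
have K2_gt0 : 0 < K2 + 1 by lra.
have e1_gt0 : 0 < eps / (2 * (K1 + 1)) by rewrite divr_gt0 ?mulr_gt0.
have [r [r_gt0 fr]] := fG _ e1_gt0.
exists (Num.min 1 (Num.min (r / (K1 + 1)) (eps / (2 * (K2 + 1))))).
split; first by rewrite !lt_min ltr01 !divr_gt0 ?mulr_gt0.
move=> D Dsym; rewrite !lt_min => /and3P[d_lt1 d_ltr d_lteps].
set d := mnorm D in d_lt1 d_ltr d_lteps *.
have d_ge0 : 0 <= d by exact: l1norm_ge0.
set E := phi (L + D) - phi L.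
have E_le : mnorm E <= (K1 + 1) * d.
  by apply: le_trans (phi_lip D Dsym (ltW d_lt1)) _; rewrite ler_wpM2r // lerDl.
have E_lt : mnorm E < r by apply: le_lt_trans E_le _; rewrite mulrC -ltr_pdivlMr.
have := fr E (phi_sym D Dsym) E_lt; rewrite [phi L + E]addrC subrK => fE.
have := phi_tr D Dsym (ltW d_lt1); rewrite -/E -/d => trE.
have eps1 : eps / (2 * (K1 + 1)) * mnorm E <= eps / 2 * d.
  apply: le_trans (ler_wpM2l (ltW e1_gt0) E_le) _.
  by rewrite mulrA invfM mulrA mulfVK ?gt_eqF // -mulrA mulrC.
have eps2 : K2 * d ^+ 2 <= eps / 2 * d.
  rewrite expr2 mulrA ler_wpM2r //.
  have : d * (K2 + 1) < eps / 2 by rewrite -ltr_pdivlMr // -mulrA -invfM.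
  nra.
have := ler_distD (\tr (G *m E)) (f (phi (L + D)) - f (phi L)) (\tr (G' *m D)).
lra.
Qed.

Section Isotropy.
Variables (R : realType) (h : 'M[R]_3 -> 'M[R]_3).
Hypothesis h_iso : forall Q C : 'M[R]_3, rotation Q -> posdef C ->
  Q^T *m h C *m Q = h (Q^T *m C *m Q).

Lemma comm_rotation_iso B Q : posdef B -> rotation Q -> comm_mx Q B -> comm_mx Q (h B).
Proof.
move=> PB [QTQ detQ] QB; have QQT : Q *m Q^T = 1%:M by apply: mulmx1C.
have QBQ : Q^T *m B *m Q = B by rewrite -mulmxA -QB mulmxA QTQ mul1mx.
have := h_iso (conj QTQ detQ) PB; rewrite QBQ => hBQ.
by rewrite /comm_mx -{1}hBQ !mulmxA QQT mul1mx.
Qed.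

Lemma comm_iso_of_commutant B M : posdef B -> symmx M ->
  (forall Q, comm_mx Q M -> comm_mx Q B) -> comm_mx (h B) M.
Proof.
move=> PB MT MB; apply: (comm_mx_of_half_turns (H := h B) MT) => x x0 QM.
exact: comm_rotation_iso PB (half_turn_rotation x0) (MB _ QM).
Qed.

End Isotropy.

Theorem theorem2 (R : realType) (alpha : 'M[R]_3 -> R) (h : 'M[R]_3 -> 'M[R]_3)
  (Hgrad : forall C : 'M[R]_3, posdef C -> sym_gradient alpha C (h C))
  (Hiso : forall Q C : 'M[R]_3, rotation Q -> posdef C ->
            Q^T *m h C *m Q = h (Q^T *m C *m Q)) :
  forall B L S : 'M[R]_3,
    posdef B ->
    symmx L -> expm L = B ->        (* L = ln B *)
    posdef S -> S *m S = B ->       (* S = B^{1/2} *)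
    sym_gradient (fun X => alpha (expm X)) L (S *m h B *m S).
Proof.
move=> B L S PB Lsym LB PS SB.
have [[Ssym _] [Hsym _]] := (PS, Hgrad B PB).
have HL : comm_mx (h B) L.
  apply: (comm_iso_of_commutant Hiso PB Lsym) => Q QL.
  by rewrite -LB expmE; exact: comm_mx_expmx.
have HS : comm_mx (h B) S.
  apply: (comm_iso_of_commutant Hiso PB Ssym) => Q QS.
  by rewrite -SB; exact: comm_mxM.
set H := h B in Hsym HL HS *.
have SHS : S *m H *m S = H *m B by rewrite -HS -mulmxA SB.
pose b := mnorm L + 1.
apply: (sym_gradient_comp (G := H) (K1 := 3 * expR (2 * b))
                          (K2 := mnorm H * (3 * expR (4 * b)))).
- by rewrite mulr_ge0 ?expR_ge0.
- by rewrite !mulr_ge0 ?expR_ge0 ?l1norm_ge0.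
- by rewrite /symmx !trmx_mul Ssym Hsym mulmxA.
- by rewrite LB; exact: Hgrad.
- move=> D Dsym; rewrite /symmx linearB /= !expmE !expmx_tr.
  by rewrite linearD /= Lsym Dsym.
- move=> D _ D_le1; rewrite mulrAC !expmE !mnormE.
  exact: l1norm_expmxDB.
- move=> D _ D_le1; rewrite SHS -LB !expmE !mnormE.
  rewrite (_ : l1norm H * (3 * expR (4 * b)) * l1norm D ^+ 2 =
               l1norm H * (3 * l1norm D ^+ 2 * expR (4 * b))); last by ring.
  exact: trace_expmx_taylor.
Qed.
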